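(* For every $n\ge1$, the permutation $w=n\,(n-1)\cdots2\,1$ is the unique $w\in S_n$ with $\operatorname{stab}(w)=1$.
   Context: $T(w)$ is the standard skew tableau of shape $(1)\cup\cdots\cup(1)$ ($n$ single cells placed along an anti-diagonal, each strictly northeast of the previous, no shared rows or columns) whose reading word (rows read left to right, from bottom row to top row) is $w$. $\operatorname{stab}(w)=\operatorname{stab}(T(w))$, where for a standard skew tableau $S$ with $m$ cells whose row lengths weakly decrease from top to bottom: $S^{(k)}$ is obtained by attaching $k-1$ shifted copies of $S$ to the right of $S$ (row $i$ of $S^{(k)}$ begins in the same column as row $i$ of $S$ and consists of the entries of row $i$ of $S$, followed by these entries plus $m$, ..., plus $(k-1)m$); $S$ stabilizes at $k$ if every entry in $[(k-1)m+1,km]$ lies in the same row of $\operatorname{Rect}(S^{(k)})$ as in $S^{(k)}$ ($\operatorname{Rect}$ = jeu de taquin rectification); $\operatorname{stab}(S)$ is the least such $k\ge1$. *)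

From mathcomp Require Import all_boot all_fingroup.
Set Implicit Arguments.
Unset Strict Implicit.
Unset Printing Implicit Defensive.

(* A skew tableau is given by its row offsets [mu] (row i, counted from the
   top starting at 0, begins in column [nth 0 mu i]) and its row contents
   [rows] (row i holds the entries [nth [::] rows i], left to right). *)
Definition skew := (seq nat * seq (seq nat))%type.

Definition cells (S : skew) : seq (nat * nat * nat) :=
  flatten [seq [seq (i, nth 0 S.1 i + j, nth 0 (nth [::] S.2 i) j)
               | j <- iota 0 (size (nth [::] S.2 i))]
          | i <- iota 0 (size S.2)].

Definition ncells (S : skew) : nat := sumn (map size S.2).

Definition lookup (T : seq (nat * nat * nat)) (r c : nat) : option nat :=
  ohead [seq x.2 | x <- T & x.1 == (r, c)].

Definition move (T : seq (nat * nat * nat)) (p q : nat * nat) :=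
  [seq (if x.1 == p then (q, x.2) else x) | x <- T].

(* One forward jeu de taquin slide, the hole being at (r, c).  The hole
   moves at most (#cells) times, so the fuel (#cells).+1 suffices. *)
Fixpoint slide (fuel : nat) (T : seq (nat * nat * nat)) (r c : nat) :=
  match fuel with
  | 0 => T
  | fuel'.+1 =>
    match lookup T r c.+1, lookup T r.+1 c with
    | None, None => T
    | Some _, None => slide fuel' (move T (r, c.+1) (r, c)) r c.+1
    | None, Some _ => slide fuel' (move T (r.+1, c) (r, c)) r.+1 c
    | Some x, Some y =>
        if y < x then slide fuel' (move T (r.+1, c) (r, c)) r.+1 c
        else slide fuel' (move T (r, c.+1) (r, c)) r c.+1
    end
  end.

(* Order in which the cells of the inner shape mu are used as inner corners:
   bottom row first, each row from right to left (each is an inner corner at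
   the time it is used). *)
Definition inner_order (mu : seq nat) : seq (nat * nat) :=
  flatten [seq [seq (r, c) | c <- rev (iota 0 (nth 0 mu r))]
          | r <- rev (iota 0 (size mu))].

Definition Rect (S : skew) : seq (nat * nat * nat) :=
  foldl (fun T rc => slide (size T).+1 T rc.1 rc.2) (cells S) (inner_order S.1).

Definition row_of (T : seq (nat * nat * nat)) (e : nat) : option nat :=
  ohead [seq x.1.1 | x <- T & x.2 == e].

Definition skew_pow (S : skew) (k : nat) : skew :=
  (S.1, [seq flatten [seq [seq x + t * ncells S | x <- row] | t <- iota 0 k]
        | row <- S.2]).

Definition stabilizes (S : skew) (k : nat) : bool :=
  let Sk := skew_pow S k in
  all (fun e => row_of (Rect Sk) e == row_of (cells Sk) e)
      (iota ((k - 1) * ncells S).+1 (ncells S)).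

Definition stab_is (S : skew) (k : nat) : Prop :=
  [/\ 1 <= k, stabilizes S k & forall j, 1 <= j < k -> ~~ stabilizes S j].

(* T(w) for w in S_n (one-line notation w_j = (w (j-1)) + 1).  Row i (from
   the top, 0-based) is the single cell in column n-1-i containing w_{n-i};
   so the reading word (bottom row to top row) is w_1 ... w_n. *)
Definition Tw_seq (n : nat) (v : seq nat) : skew :=
  ([seq n.-1 - i | i <- iota 0 n], [seq [:: nth 0 v (n.-1 - i)] | i <- iota 0 n]).

Definition Tw (n : nat) (w : 'S_n) : skew :=
  Tw_seq n [seq (w i).+1 | i <- enum 'I_n].

From mathcomp Require Import all_boot all_fingroup.
From mathcomp Require Import zify.
Set Implicit Arguments.
Unset Strict Implicit.
Unset Printing Implicit Defensive.

(* T(w) has one cell per row, on an anti-diagonal; reading the rows from the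
   top, row i holds ent i = w_{n-i}.  Rectification empties the inner shape
   row by row, from the bottom up.  As long as the rows below row m have kept
   their entries, they have been pushed into column 0; the cell of row m then
   slides left to column 0, where it meets the cell of row m+1.  If
   ent (m+1) < ent m, that entry is pulled up into row m, and since jeu de
   taquin never moves an entry down it stays above its original row: T(w)
   does not stabilize at 1.  Otherwise nothing leaves its row.  So
   stab(w) = 1 iff ent is increasing, i.e. w_n < ... < w_1. *)

Definition row_cells (n : nat) (col ent : nat -> nat) : seq (nat * nat * nat) :=
  [seq (i, col i, ent i) | i <- iota 0 n].

Lemma lookup_iota_cells m k (col ent : nat -> nat) r c :
  lookup [seq (i, col i, ent i) | i <- iota m k] r c =
  if (m <= r < m + k) && (col r == c) then Some (ent r) else None.
Proof.
elim: k m => [|k IHk] m; first by rewrite /lookup /= addn0 ltnNge andbN.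
have /= := IHk m.+1; rewrite /lookup /= xpair_eqE.
case: (eqVneq m r) => [<-|neq_mr] /=.
  by rewrite ltnn leqnn addnS ltnS leq_addr; case: (col m == c) => [|->].
move=> ->; congr (if _ then _ else _); apply/andP/andP => -[? ?]; split; lia.
Qed.

Lemma lookup_row_cells n col ent r c :
  lookup (row_cells n col ent) r c =
  if (r < n) && (col r == c) then Some (ent r) else None.
Proof. by rewrite /row_cells lookup_iota_cells. Qed.

Lemma move_row_cells n col ent r c c' :
  move (row_cells n col ent) (r, c) (r, c') =
  row_cells n (fun i => if (i == r) && (col i == c) then c' else col i) ent.
Proof.
rewrite /move /row_cells -map_comp; apply: eq_map => i /=.
by rewrite xpair_eqE; case: eqP => [->|] //=; case: eqP.
Qed.

Lemma eq_row_cells n col col' ent :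
    (forall i, i < n -> col i = col' i) ->
  row_cells n col ent = row_cells n col' ent.
Proof.
by move=> eq_col; apply/eq_in_map => i; rewrite mem_iota => /= /eq_col ->.
Qed.

Lemma size_row_cells n col ent : size (row_cells n col ent) = n.
Proof. by rewrite size_map size_iota. Qed.

Lemma row_of_row_cells_col n col col' ent e :
  row_of (row_cells n col ent) e = row_of (row_cells n col' ent) e.
Proof. by rewrite /row_of /row_cells !filter_map -!map_comp. Qed.

Lemma row_of_map_iota n (F : nat -> nat * nat * nat) ent a :
  (forall i, (F i).2 = ent i) -> {in iota 0 n &, injective ent} -> a < n ->
  row_of [seq F i | i <- iota 0 n] (ent a) = Some (F a).1.1.
Proof.
move=> F_ent inj_ent lt_an; rewrite /row_of filter_map -map_comp.
have -> : [seq i <- iota 0 n | preim F (fun x => x.2 == ent a) i] =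
          [seq i <- iota 0 n | pred1 a i].
  apply: eq_in_filter => i iota_i /=; rewrite F_ent.
  by apply/eqP/eqP => [|->] //; apply: inj_ent; rewrite // mem_iota.
by rewrite filter_pred1_uniq ?iota_uniq // mem_iota.
Qed.

Lemma slideS_right k T r c x :
  lookup T r c.+1 = Some x ->
  (if lookup T r.+1 c is Some y then x <= y else true) ->
  slide k.+1 T r c = slide k (move T (r, c.+1) (r, c)) r c.+1.
Proof.
by move=> /= ->; case: lookup => [y|] //; rewrite leqNgt => /negbTE ->.
Qed.

Lemma slideS_below k T r c x y :
  lookup T r c.+1 = Some x -> lookup T r.+1 c = Some y -> y < x ->
  slide k.+1 T r c = slide k (move T (r.+1, c) (r, c)) r.+1 c.
Proof. by move=> /= -> -> ->. Qed.

Lemma slide_stuck k T r c :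
  lookup T r c.+1 = None -> lookup T r.+1 c = None -> slide k T r c = T.
Proof. by case: k => [|k] //= -> ->. Qed.

Definition raised (T T' : seq (nat * nat * nat)) : bool :=
  all2 (fun x y => (y.2 == x.2) && (y.1.1 <= x.1.1)) T T'.

Lemma raised_refl T : raised T T.
Proof. by elim: T => //= x T ->; rewrite eqxx leqnn. Qed.

Lemma raised_trans T1 T2 T3 : raised T1 T2 -> raised T2 T3 -> raised T1 T3.
Proof.
elim: T1 T2 T3 => [|x T1 IHT] [|y T2] [|z T3] //=.
move=> /andP[/andP[/eqP <- le_yx] r12] /andP[/andP[/eqP -> le_zy] r23].
by rewrite eqxx (leq_trans le_zy le_yx) (IHT _ _ r12 r23).
Qed.

Lemma raised_move T p q : q.1 <= p.1 -> raised T (move T p q).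
Proof.
move=> le_qp; elim: T => //= x T ->; rewrite andbT.
by case: (x.1 =P p) => [->|_]; rewrite /= eqxx ?leqnn.
Qed.

Lemma raised_slide k T r c : raised T (slide k T r c).
Proof.
elim: k T r c => [|k IHk] T r c /=; first exact: raised_refl.
case: (lookup T r c.+1) => [x|]; case: (lookup T r.+1 c) => [y|];
  rewrite ?raised_refl //; try case: ifP => _;
  by apply: raised_trans (IHk _ _ _); apply: raised_move.
Qed.

Definition rect_step (T : seq (nat * nat * nat)) (rc : nat * nat) :=
  slide (size T).+1 T rc.1 rc.2.

Lemma raised_rect_steps L T : raised T (foldl rect_step T L).
Proof.
elim: L T => [|rc L IHL] T /=; first exact: raised_refl.
exact: raised_trans (raised_slide _ _ _ _) (IHL _).
Qed.

Lemma row_of_raised T T' e r : raised T T' -> row_of T e = Some r ->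
  exists2 r', row_of T' e = Some r' & r' <= r.
Proof.
elim: T T' => [|x T IHT] [|y T'] //= /andP[/andP[/eqP eq_yx le_yx] rTT'].
rewrite /row_of /= eq_yx; case: eqP => _ /=; last exact: IHT.
by case=> <-; exists y.1.1.
Qed.

Definition antidiag (n : nat) (ent : nat -> nat) : skew :=
  ([seq n.-1 - i | i <- iota 0 n], [seq [:: ent i] | i <- iota 0 n]).

Definition row_slides (n r : nat) : seq (nat * nat) :=
  [seq (r, c) | c <- rev (iota 0 (n.-1 - r))].

Lemma eq_antidiag n ent ent' :
  (forall i, i < n -> ent i = ent' i) -> antidiag n ent = antidiag n ent'.
Proof.
move=> eq_ent; congr pair.
by apply/eq_in_map => i; rewrite mem_iota => /eq_ent ->.
Qed.

Lemma cells_antidiag n ent :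
  cells (antidiag n ent) = row_cells n (fun i => n.-1 - i) ent.
Proof.
rewrite /cells /row_cells /= size_map size_iota.
rewrite -(flatten_map1 (fun i => (i, n.-1 - i, ent i))); congr flatten.
apply/eq_in_map => i; rewrite mem_iota => /= lt_in.
by rewrite !(nth_map 0) ?size_iota // nth_iota //= addn0.
Qed.

Lemma inner_order_antidiag n ent :
  inner_order (antidiag n ent).1 =
  flatten [seq row_slides n r | r <- rev (iota 0 n)].
Proof.
rewrite /inner_order /= size_map size_iota; congr flatten.
apply/eq_in_map => r; rewrite mem_rev mem_iota /= => lt_rn.
by rewrite /row_slides (nth_map 0) ?size_iota // nth_iota.
Qed.

Lemma Rect_antidiag n ent :
  Rect (antidiag n ent) = foldl rect_step (row_cells n (fun i => n.-1 - i) ent)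
                            (flatten [seq row_slides n r | r <- rev (iota 0 n)]).
Proof. by rewrite /Rect cells_antidiag inner_order_antidiag. Qed.

Lemma ncells_antidiag n ent : ncells (antidiag n ent) = n.
Proof.
rewrite /ncells -[map size _]/(shape _) -size_flatten flatten_map1.
by rewrite size_map size_iota.
Qed.

Lemma skew_pow1 S : skew_pow S 1 = S.
Proof.
case: S => mu rows; congr pair; rewrite /= -[RHS]map_id; apply: eq_map => row.
by rewrite /= mul0n cats0 -[RHS]map_id; apply: eq_map => x; rewrite addn0.
Qed.

Section AntidiagRect.

Variables (n : nat) (ent : nat -> nat).

(* The configuration reached by rectification while the cell of row [m] sits
   in column [d]: the rows below [m] are already in column 0, those above [m]
   have not moved yet. *)
Definition jdt_col (m d i : nat) : nat :=
  if m < i then 0 else if i == m then d else n.-1 - i.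

Definition jdt_cells (m d : nat) := row_cells n (jdt_col m d) ent.

Lemma size_jdt_cells m d : size (jdt_cells m d) = n.
Proof. exact: size_row_cells. Qed.

Lemma lookup_jdt_cells_row m d c : m < n ->
  lookup (jdt_cells m d) m c = if d == c then Some (ent m) else None.
Proof. by move=> lt_mn; rewrite lookup_row_cells lt_mn /jdt_col ltnn eqxx. Qed.

Lemma lookup_jdt_cells_below m d c : m.+1 < n ->
  lookup (jdt_cells m d) m.+1 c = if c == 0 then Some (ent m.+1) else None.
Proof. by move=> lt_mn; rewrite lookup_row_cells lt_mn /jdt_col ltnSn eq_sym. Qed.

Lemma rect_step_row m c : m.+1 < n -> (c = 0 -> ent m <= ent m.+1) ->
  rect_step (jdt_cells m c.+1) (m, c) = jdt_cells m c.
Proof.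
move=> lt_mn sorted_m; rewrite /rect_step size_jdt_cells.
rewrite (@slideS_right _ _ _ _ (ent m)) /=; first last.
- by rewrite lookup_jdt_cells_below //; case: eqP => // /sorted_m.
- by rewrite lookup_jdt_cells_row ?eqxx // ltnW.
rewrite /jdt_cells move_row_cells slide_stuck;
  try by rewrite lookup_row_cells /jdt_col; do ! case: ifP => //; lia.
by apply: eq_row_cells => i _; rewrite /jdt_col; do ! case: ifP; lia.
Qed.

Lemma rect_steps_row_prefix m k : m.+1 < n ->
  foldl rect_step (jdt_cells m k.+1) [seq (m, c) | c <- rev (iota 1 k)] =
  jdt_cells m 1.
Proof.
move=> lt_mn; elim: k => [|k IHk] //.
have -> : iota 1 k.+1 = rcons (iota 1 k) k.+1.
  by rewrite -cats1 -(addn1 k) iotaD add1n addn1.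
by rewrite rev_rcons /= rect_step_row.
Qed.

Lemma rect_row_slides m : m.+1 < n ->
  foldl rect_step (jdt_cells m.+1 0) (row_slides n m) =
  rect_step (jdt_cells m 1) (m, 0).
Proof.
move=> lt_mn; rewrite /row_slides.
have -> : n.-1 - m = (n.-1 - m).-1.+1 by lia.
rewrite [iota 0 _]/= rev_cons map_rcons foldl_rcons.
rewrite -(@rect_steps_row_prefix _ (n.-1 - m).-1 lt_mn).
congr (rect_step (foldl _ _ _) _).
by apply: eq_row_cells => i _; rewrite /jdt_col; do ! case: ifP; lia.
Qed.

Lemma rect_step_corner_descent m : m.+1 < n -> ent m.+1 < ent m ->
  rect_step (jdt_cells m 1) (m, 0) =
  slide n (move (jdt_cells m 1) (m.+1, 0) (m, 0)) m.+1 0.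
Proof.
move=> lt_mn lt_ent; rewrite /rect_step size_jdt_cells.
rewrite (@slideS_below _ _ _ _ (ent m) (ent m.+1)) //=.
  by rewrite lookup_jdt_cells_row // ltnW.
by rewrite lookup_jdt_cells_below.
Qed.

Lemma rect_sorted_rows k : k <= n ->
    (forall i, n - k <= i -> i.+1 < n -> ent i <= ent i.+1) ->
  foldl rect_step (row_cells n (fun i => n.-1 - i) ent)
    (flatten [seq row_slides n r | r <- rev (iota (n - k) k)]) =
  jdt_cells (n - k) 0.
Proof.
elim: k => [|k IHk] le_kn sorted_ent.
  rewrite subn0; apply: eq_row_cells => i lt_in.
  by rewrite /jdt_col; do ! case: ifP; lia.
set m := n - k.+1; have def_m : n - k = m.+1 by rewrite /m; lia.
rewrite [iota m k.+1]/= -def_m rev_cons map_rcons flatten_rcons foldl_cat.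
rewrite IHk => [||i le_i lt_in]; last 2 first.
- exact: ltnW.
- by apply: sorted_ent; rewrite /m; lia.
rewrite def_m.
have [lt_mn|le_nm] := ltnP m.+1 n.
  by rewrite rect_row_slides // rect_step_row // => _; apply: sorted_ent.
rewrite /row_slides (_ : n.-1 - m = 0) /=; last lia.
by apply: eq_row_cells => i _; rewrite /jdt_col; do ! case: ifP; lia.
Qed.

End AntidiagRect.

Lemma Rect_antidiag_descent n ent m :
    m.+1 < n -> {in iota 0 n &, injective ent} ->
    (forall i, m < i -> i.+1 < n -> ent i <= ent i.+1) -> ent m.+1 < ent m ->
  exists2 r, row_of (Rect (antidiag n ent)) (ent m.+1) = Some r & r <= m.
Proof.
move=> lt_mn inj_ent sorted_tail descent; have lt_m1n := ltnW lt_mn.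
have split_rows : iota 0 n = iota 0 m ++ m :: iota (n - (n - m.+1)) (n - m.+1).
  by rewrite (subKn lt_m1n) -{1}(subnKC (ltnW lt_m1n)) iotaD -(subnSK lt_m1n).
rewrite Rect_antidiag split_rows rev_cat rev_cons map_cat map_rcons.
rewrite flatten_cat flatten_rcons !foldl_cat.
rewrite rect_sorted_rows ?leq_subr //; last first.
  by move=> i; rewrite (subKn lt_m1n) => lt_mi; apply: sorted_tail.
rewrite (subKn lt_m1n) rect_row_slides // rect_step_corner_descent //.
apply: row_of_raised _.
  exact: raised_trans (raised_slide _ _ _ _) (raised_rect_steps _ _).
rewrite /jdt_cells /move /row_cells -map_comp (row_of_map_iota (ent := ent)) //=.
  by rewrite /jdt_col ltnSn eqxx.
by move=> i /=; case: ifP.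
Qed.

Lemma stabilizes_antidiag1 n ent :
    (forall i, i < n -> 0 < ent i <= n) -> {in iota 0 n &, injective ent} ->
  stabilizes (antidiag n ent) 1 <-> (forall i, i.+1 < n -> ent i <= ent i.+1).
Proof.
move=> ent_range inj_ent.
rewrite /stabilizes skew_pow1 ncells_antidiag subnn mul0n.
split=> [/allP stab | sorted_ent]; last first.
  apply/allP => e _; rewrite Rect_antidiag -{1}(subnn n) rect_sorted_rows //;
    last by move=> i _; apply: sorted_ent.
  rewrite subnn cells_antidiag /jdt_cells.
  by rewrite (row_of_row_cells_col _ _ (fun i => n.-1 - i)).
suff sorted_from k :
    k <= n -> forall i, n - k <= i -> i.+1 < n -> ent i <= ent i.+1.
  by move=> i; apply: (sorted_from n) => //; rewrite subnn.
elim: k => [|k IHk] le_kn i le_i lt_in; first lia.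
have [lt_ki|le_ik] := ltnP (n - k.+1) i; first by apply: IHk => //; lia.
have {le_ik le_i} def_i : i = n - k.+1 by lia.
subst i.
set m := n - k.+1 in lt_in *; rewrite leqNgt; apply/negP => descent.
have [|r Rect_r le_rm] := Rect_antidiag_descent lt_in inj_ent _ descent.
  by move=> j lt_mj; apply: IHk => //; rewrite /m in lt_mj; lia.
have ent_m1 : ent m.+1 \in iota 1 n.
  by rewrite mem_iota; have := ent_range _ lt_in; lia.
have /eqP := stab _ ent_m1; rewrite Rect_r cells_antidiag.
rewrite /row_cells (row_of_map_iota (ent := ent)) // => -[eq_rm].
by rewrite eq_rm ltnn in le_rm.
Qed.

Lemma sorted_leq_iota n (r : seq nat) :
    uniq r -> {subset r <= iota 1 n} -> size r = n ->
  sorted leq r = (r == iota 1 n).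
Proof.
move=> uniq_r sub_r size_r.
apply/idP/eqP => [sorted_r|->]; last exact: iota_sorted.
have le_size : size (iota 1 n) <= size r by rewrite size_iota size_r.
have [_ eq_r] := uniq_min_size uniq_r sub_r le_size.
apply: (sorted_eq leq_trans anti_leq sorted_r (iota_sorted 1 n)).
exact: uniq_perm uniq_r (iota_uniq 1 n) eq_r.
Qed.

Lemma stabilizes_antidiag_nth1 n (r : seq nat) :
    uniq r -> {subset r <= iota 1 n} -> size r = n ->
  stabilizes (antidiag n (nth 0 r)) 1 = (r == iota 1 n).
Proof.
move=> uniq_r sub_r size_r; rewrite -sorted_leq_iota //.
have r_range i : i < n -> 0 < nth 0 r i <= n.
  move=> lt_in; have lt_ir : i < size r by rewrite size_r.
  by have := sub_r _ (mem_nth 0 lt_ir); rewrite mem_iota add1n ltnS.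
have inj_r : {in iota 0 n &, injective (nth 0 r)}.
  move=> i j; rewrite !mem_iota !leq0n !add0n -size_r /= => lt_ir lt_jr /eqP.
  by rewrite nth_uniq // => /eqP.
have stab_iff := stabilizes_antidiag1 r_range inj_r.
apply/idP/idP => [/stab_iff sorted_r | /(sortedP 0) sorted_r].
  by apply/(sortedP 0); rewrite size_r.
by apply/stab_iff => i; rewrite -size_r; apply: sorted_r.
Qed.

Lemma stab_is1 S : stab_is S 1 <-> stabilizes S 1.
Proof. by split=> [[]|stab1] //; split=> // -[|j] /andP[]. Qed.

Lemma rev_iota_ord n : rev (iota 1 n) = [seq (rev_ord i).+1 | i <- enum 'I_n].
Proof.
apply: (@eq_from_nth _ 0) => [|i].
  by rewrite size_rev size_iota size_map size_enum_ord.
rewrite size_rev size_iota => lt_in.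
rewrite nth_rev ?size_iota // (nth_map (Ordinal lt_in)) ?size_enum_ord //.
rewrite nth_iota; last lia.
by rewrite /= nth_enum_ord //; lia.
Qed.

Theorem mainTheorem18 (n : nat) (hn : 1 <= n) (w : 'S_n) :
  stab_is (Tw w) 1 <-> (forall i : 'I_n, w i = rev_ord i).
Proof.
set s := [seq (w i).+1 | i <- enum 'I_n].
have size_s : size s = n by rewrite size_map size_enum_ord.
have -> : Tw w = antidiag n (nth 0 (rev s)).
  rewrite [Tw w](_ : _ = antidiag n (fun i => nth 0 s (n.-1 - i))) //.
  by apply: eq_antidiag => i lt_in; rewrite nth_rev size_s //; congr nth; lia.
rewrite stab_is1 stabilizes_antidiag_nth1 ?size_rev ?rev_uniq //; first last.
- move=> x; rewrite mem_rev => /mapP[i _ ->].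
  by rewrite mem_iota add1n !ltnS leq0n ltn_ord.
- by rewrite map_inj_uniq ?enum_uniq // => i j /succn_inj/val_inj/perm_inj.
rewrite -[iota 1 n]revK (can_eq revK) rev_iota_ord.
split=> [/eqP/eq_in_map eq_w i | eq_w].
  by apply/val_inj/succn_inj/eq_w; rewrite mem_enum.
by apply/eqP/eq_in_map => i _; rewrite eq_w.
Qed.
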